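(* Suppose $X$ and $Y$ are independent real random variables, where $X$ has a symmetric, unimodal density. Then $\mathrm{MAD}(X)\le\mathrm{MAD}(X+Y)$.
   Context: For a random variable $Z$, $\mathrm{med}(Z)$ denotes its median and the median absolute deviation is $\mathrm{MAD}(Z)=\mathrm{med}\big(|Z-\mathrm{med}(Z)|\big)$. *)

From HB Require Import structures.
From mathcomp Require Import all_boot all_order all_algebra.
From mathcomp Require Import all_classical all_reals all_analysis.
Set Implicit Arguments. Unset Strict Implicit. Unset Printing Implicit Defensive.
Import Order.TTheory GRing.Theory Num.Theory.
Import numFieldNormedType.Exports.
Local Open Scope classical_set_scope.
Local Open Scope ring_scope.

Definition indep_rv d (T : measurableType d) (R : realType) (P : probability T R)
  (X Y : T -> R) : Prop :=
  forall A B : set R, measurable A -> measurable B ->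
    P (X @^-1` A `&` Y @^-1` B) = (P (X @^-1` A) * P (Y @^-1` B))%E.

Definition has_density d (T : measurableType d) (R : realType) (P : probability T R)
  (X : T -> R) (f : R -> R) : Prop :=
  (forall x, 0 <= f x) /\ measurable_fun setT f /\
  forall A : set R, measurable A ->
    P (X @^-1` A) = (\int[@lebesgue_measure R]_(x in A) (f x)%:E)%E.

Definition symmetric_unimodal (R : realType) (f : R -> R) : Prop :=
  exists c : R,
    (forall x, f (c + x) = f (c - x)) /\
    (forall x y, x <= y -> y <= c -> f x <= f y) /\
    (forall x y, c <= x -> x <= y -> f y <= f x).

Definition is_median d (T : measurableType d) (R : realType) (P : probability T R)
  (Z : T -> R) (m : R) : Prop :=
  lee ((2:R)^-1)%:E (P [set w | Z w <= m]) /\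
  lee ((2:R)^-1)%:E (P [set w | m <= Z w]).

Definition is_MAD d (T : measurableType d) (R : realType) (P : probability T R)
  (Z : T -> R) (a : R) : Prop :=
  exists m, is_median P Z m /\ is_median P (fun w => `|Z w - m|) a.

(* The density f of X is symmetric and unimodal about some c, so f x depends
   only on |x - c| and decreases with it.  Hence the median of X is c, and
   among all intervals of a given length the one centred at c has the largest
   X-mass (Anderson's inequality in dimension one).  Cutting the range of Y into
   cells of width 2e and using independence, P(|X + Y - v| <= b) is at most the
   largest X-mass of an interval of radius b + e, that is P(|X - c| <= b + e).
   If a is a MAD of X and b one of X + Y, the sets {|X - c| <= b + e} and
   {|X - c| >= a} both have probability at least 1/2; were a > b + e, the gap
   between them would carry positive mass.  So a <= b + e for every e > 0. *)
From HB Require Import structures.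
From mathcomp Require Import all_boot all_order all_algebra.
From mathcomp Require Import all_classical all_reals all_analysis.
From mathcomp Require Import measurable_realfun lra.
Import Order.TTheory GRing.Theory Num.Theory.
Local Open Scope classical_set_scope.
Local Open Scope ring_scope.

Section measure_comparison.
Context {d : measure_display} {T : measurableType d} {R : realType}.
Local Open Scope ereal_scope.

Lemma le_measure_setD (mu : {measure set T -> \bar R}) (A C : set T) :
  measurable A -> measurable C -> mu (A `\` C) <= mu (C `\` A) -> mu A <= mu C.
Proof.
move=> mA mC le_diff.
by rewrite (measureDI mu mA mC) (measureDI mu mC mA) setIC leeD2r.
Qed.

Lemma measure_setD_sym (mu : {measure set T -> \bar R}) (A C : set T) :
  measurable A -> measurable C -> mu A = mu C -> mu A < +oo ->
  mu (A `\` C) = mu (C `\` A).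
Proof.
move=> mA mC AC Afin.
have Cfin : mu C < +oo by rewrite -AC.
rewrite (measureD mA mC Afin) (measureD mC mA Cfin) setIC.
by congr (_ - _).
Qed.

Lemma probability_between_halves (P : probability T R) (A B C : set T) :
  measurable A -> measurable B -> measurable C ->
  A `&` B = set0 -> (A `|` B) `&` C = set0 ->
  (2^-1)%:E <= P A -> (2^-1)%:E <= P C -> P B = 0.
Proof.
move=> mA mB mC AB ABC PA PC.
have le1 : P A + P B + P C <= 1.
  have := probability_le1 P (measurableU _ _ (measurableU _ _ mA mB) mC).
  by rewrite !measureU //; exact: measurableU.
apply/eqP; rewrite eq_le measure_ge0 andbT; move: PA PC le1 (measure_ge0 P B).
have /fineK <- := fin_num_measure P A mA; have /fineK <- := fin_num_measure P B mB.
have /fineK <- := fin_num_measure P C mC.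
rewrite -!EFinD !lee_fin; lra.
Qed.

Lemma ge0_of_half_prob_dist_le {P : probability T R} {Z : T -> R} {m b : R} :
  (2^-1)%:E <= P [set w | (`|Z w - m| <= b)%R] -> (0 <= b)%R.
Proof.
move=> half; rewrite leNgt; apply/negP => b_lt0.
suff E0 : [set w | (`|Z w - m| <= b)%R] = set0.
  by move: half; rewrite E0 measure0 lee_fin; lra.
by apply/seteqP; split => // w /=; have := normr_ge0 (Z w - m)%R; lra.
Qed.

End measure_comparison.

Section lebesgue_reflection.
Context {R : realType} (t : R).
Local Notation lambda := (@lebesgue_measure R).
Local Notation refl := (fun x : R => t - x).

Lemma measurable_fun_reflect : measurable_fun setT refl.
Proof. exact: measurable_funB. Qed.

Lemma lebesgue_measure_reflect (A : set R) : measurable A ->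
  lambda (refl @^-1` A) = lambda A.
Proof.
move=> mA; rewrite -[LHS]/(pushforward lambda (refl : _ -> measurableTypeR R) A).
have mrefl := measurable_fun_reflect.
symmetry; apply: (@lebesgue_measure_unique R (pushforward lambda (refl : _ -> measurableTypeR R))).
  move=> _ /ocitvP[->|[[a b] /= ab ->]]; first by rewrite /pushforward !measure0.
  rewrite /pushforward.
  have -> : refl @^-1` `]a, b] = `[t - b, t - a[%classic.
    by apply/seteqP; split => x /=; rewrite !in_itv /= => /andP[? ?]; apply/andP; split; lra.
  rewrite !lebesgue_measure_itv /= !lte_fin ab.
  have -> : t - b < t - a by lra.
  by rewrite -!EFinD; congr (_%:E); lra.
exact: mA.
Qed.

Lemma ge0_integral_reflect (A : set R) (g : R -> R) : measurable A ->
  measurable_fun setT g -> (forall x, 0 <= g x) ->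
  (\int[lambda]_(x in A) (g x)%:E = \int[lambda]_(x in refl @^-1` A) (g (t - x))%:E)%E.
Proof.
move=> mA mg g0.
have mrefl : measurable_fun (setT : set (measurableTypeR R))
    (refl : measurableTypeR R -> measurableTypeR R) := measurable_fun_reflect.
transitivity (\int[pushforward lambda (refl : measurableTypeR R -> measurableTypeR R)]_(x in A) (g x)%:E)%E.
  apply: eq_measure_integral => B mB _; exact/esym/lebesgue_measure_reflect.
rewrite ge0_integral_pushforward //.
- exact/measurable_EFinP/measurable_funTS.
- by move=> x _; rewrite lee_fin.
Qed.

End lebesgue_reflection.

Lemma set_distr_le {R : realType} (u s : R) :
  [set x | `|x - u| <= s] = `[u - s, u + s]%classic.
Proof. by apply/seteqP; split => x; rewrite /= in_itv /= ler_distl. Qed.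

Lemma lebesgue_measure_distr_le {R : realType} (u s : R) : 0 <= s ->
  lebesgue_measure [set x | `|x - u| <= s] = (s *+ 2)%:E.
Proof.
move=> s_ge0; rewrite set_distr_le lebesgue_measure_itv /= lte_fin.
case: ifPn => [_|]; first by rewrite -EFinD; congr (_%:E); lra.
by rewrite -leNgt => ?; congr (_%:E); lra.
Qed.

Section cells.
Context {R : realType} (e : R).
Hypothesis e_gt0 : 0 < e.

(* The cells are the intervals [k e, (k + 1) e[ for k : int, numbered through
   the countable structure of int. *)
Definition cell (y : R) : nat := pickle (Num.floor (y / e)).

Definition cell_lo (n : nat) : R :=
  if @pickle_inv int n is Some k then k%:~R * e else 0.

Lemma floor_divr_eq (k : int) (y : R) :
  (Num.floor (y / e) == k) = (k%:~R * e <= y < (k + 1)%:~R * e).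
Proof. by rewrite floor_eq !ler_pdivlMr // ltr_pdivrMr. Qed.

Lemma cell_loP y : cell_lo (cell y) <= y < cell_lo (cell y) + e.
Proof.
rewrite /cell_lo /cell pickleK_inv.
by have := floor_divr_eq (Num.floor (y / e)) y; rewrite eqxx intrD mulrDl mul1r.
Qed.

Lemma measurable_cell n : measurable (cell @^-1` [set n]).
Proof.
case En : (@pickle_inv int n) => [k|]; last first.
  suff -> : cell @^-1` [set n] = set0 by [].
  by apply/seteqP; split => // y /= yn; move: En; rewrite -yn pickleK_inv.
have <- : pickle k = n by have := @pickle_invK int n; rewrite En.
suff -> : cell @^-1` [set pickle k] = `[k%:~R * e, (k + 1)%:~R * e[%classic.
  exact: measurable_itv.
apply/seteqP; split => y /=; rewrite in_itv /= -floor_divr_eq /cell.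
  by move/(pcan_inj pickleK_inv)/eqP.
by move/eqP ->.
Qed.

End cells.
Arguments cell_loP {R e}.
Arguments measurable_cell {R e}.

Section independent_sum.
Context d (T : measurableType d) (R : realType) (P : probability T R).

Lemma sum_probability_fibers_le1 (g : T -> nat) :
  (forall n, measurable (g @^-1` [set n])) ->
  (\sum_(n <oo) P (g @^-1` [set n]) <= 1)%E.
Proof.
move=> mg.
have tg : trivIset setT (fun n => g @^-1` [set n]).
  apply/trivIsetP => i j _ _ ij; apply/seteqP; split => // w [/= gi gj].
  by move: ij; rewrite -gi -gj eqxx.
have := measure_bigcup P setT (fun n => g @^-1` [set n]) (fun n _ => mg n) tg.
rewrite (eq_eseriesl _ (Q := xpredT)); last by move=> n; rewrite in_setT.
by move=> <-; apply: probability_le1; exact: bigcupT_measurable.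
Qed.

Lemma prob_dist_add_le (X Y : {RV P >-> R}) (r e q v : R) :
  indep_rv P X Y -> 0 < e ->
  (forall u, (P (X @^-1` [set x | (`|x - u| <= r + e)%R]) <= q%:E)%E) ->
  (P [set w | (`|X w + Y w - v| <= r)%R] <= q%:E)%E.
Proof.
move=> indXY e_gt0 hX.
have e2_gt0 : 0 < e *+ 2 by rewrite mulrn_wgt0.
pose C n := Y @^-1` (cell (e *+ 2) @^-1` [set n]).
(* If Y w lies in the cell [lo, lo + 2e[ and |X w + Y w - v| <= r, then
   X w is within r + e of v - lo - e. *)
pose J n := [set x | `|x - (v - cell_lo (e *+ 2) n - e)| <= r + e].
have mC n : measurable (C n) by exact: measurable_funPTI (measurable_cell e2_gt0 n).
have mJ n : measurable (J n) by rewrite /J set_distr_le; exact: measurable_itv.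
have mE : measurable [set w | `|X w + Y w - v| <= r].
  have -> : [set w | `|X w + Y w - v| <= r] =
      (fun w => X w + Y w) @^-1` `[v - r, v + r] by rewrite -set_distr_le.
  rewrite -[X in measurable X]setTI.
  by apply: (measurable_funD _ _ measurableT (measurable_itv _)); exact: measurable_funP.
have cover : [set w | `|X w + Y w - v| <= r] `<=` \bigcup_n (X @^-1` J n `&` C n).
  move=> w /=; rewrite ler_distl => /andP[lo hi].
  exists (cell (e *+ 2) (Y w)) => //; split => //=.
  have /andP[] := cell_loP e2_gt0 (Y w); rewrite /J /= ler_distl mulr2n => ? ?.
  by apply/andP; split; lra.
have mXJC n : measurable (X @^-1` J n `&` C n).
  exact: measurableI (measurable_funPTI X (mJ n)) (mC n).
apply: (le_trans (measure_sigma_subadditive P mXJC mE cover)).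
apply: (@le_trans _ _ (\sum_(0 <= n <oo) (q%:E * P (C n)))%E).
  apply: lee_nneseries => [n _ _|n _]; first exact: measure_ge0.
  apply: (@le_trans _ _ (P (X @^-1` J n) * P (C n))%E).
    rewrite le_eqVlt; apply/orP; left; apply/eqP.
    by apply: indXY; [exact: mJ | exact: measurable_cell].
  by apply: lee_wpmul2r; [exact: measure_ge0|exact: hX].
have q_ge0 : 0 <= q by rewrite -lee_fin (le_trans (measure_ge0 P (X @^-1` J 0%N))) ?hX.
rewrite nneseriesZl; last by move=> n _; exact: measure_ge0.
rewrite -[leRHS]mule1; apply: lee_wpmul2l; first by rewrite lee_fin.
exact: sum_probability_fibers_le1.
Qed.

End independent_sum.
Arguments prob_dist_add_le {d T R P X Y r e q v}.

Section symmetric_unimodal_law.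
Context {R : realType} (mu : probability R R) (f : R -> R) (c : R).
Hypotheses (f_ge0 : forall x, 0 <= f x) (mf : measurable_fun setT f).
Hypothesis mu_density : forall A, measurable A ->
  mu A = (\int[lebesgue_measure]_(x in A) (f x)%:E)%E.
Hypothesis f_sym : forall x, f (c + x) = f (c - x).
Hypothesis f_incr : forall x y, x <= y -> y <= c -> f x <= f y.

Lemma density_dist x : f x = f (c - `|x - c|).
Proof.
have [xc|xc] := leP c x.
  by rewrite ger0_norm ?subr_ge0 // -f_sym subrKC.
by rewrite ltr0_norm ?subr_lt0 // opprB subKr.
Qed.

Lemma le_density_dist x y : `|x - c| <= `|y - c| -> f y <= f x.
Proof.
move=> xy; rewrite (density_dist x) (density_dist y).
have cx_ge0 := normr_ge0 (x - c).
by apply: f_incr; lra.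
Qed.

Lemma mass_le (S : set R) (t : R) : measurable S -> 0 <= t ->
  (forall x, S x -> f x <= t) -> (mu S <= t%:E * lebesgue_measure S)%E.
Proof.
move=> mS t_ge0 ft; rewrite mu_density // -integral_cst //.
apply: ge0_le_integral => //; first by move=> x _; rewrite lee_fin.
exact/measurable_EFinP/measurable_funTS.
Qed.

Lemma mass_ge (S : set R) (t : R) : measurable S -> 0 <= t ->
  (forall x, S x -> t <= f x) -> (t%:E * lebesgue_measure S <= mu S)%E.
Proof.
move=> mS t_ge0 ft; rewrite mu_density // -integral_cst //.
by apply: ge0_le_integral => //; exact/measurable_EFinP/measurable_funTS.
Qed.

Lemma mass_reflect (A : set R) : measurable A ->
  mu ((fun x => 2 * c - x) @^-1` A) = mu A.
Proof.
move=> mA; have mrA : measurable ((fun x => 2 * c - x) @^-1` A).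
  by rewrite -[X in measurable X]setTI; exact: measurable_fun_reflect.
rewrite !mu_density // [RHS](ge0_integral_reflect (2 * c)) //.
apply: eq_integral => x _; congr (_%:E).
by rewrite (density_dist x) (density_dist (2 * c - x)) -normrN; congr (f (c - `|_|)); lra.
Qed.

Lemma mass_dist_le_center (u s : R) : 0 <= s ->
  (mu [set x | (`|x - u| <= s)%R] <= mu [set x | (`|x - c| <= s)%R])%E.
Proof.
move=> s_ge0; set I := [set x | `|x - u| <= s]; set J := [set x | `|x - c| <= s].
have mI : measurable I by rewrite /I set_distr_le; exact: measurable_itv.
have mJ : measurable J by rewrite /J set_distr_le; exact: measurable_itv.
apply: le_measure_setD => //.
have lamIJ : lebesgue_measure (I `\` J) = lebesgue_measure (J `\` I).
  apply: measure_setD_sym => //=; rewrite !lebesgue_measure_distr_le //.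
  exact: ltry.
(* f >= f (c - s) on J, f <= f (c - s) off J, and I \ J, J \ I have equal length. *)
have dist_cs : `|c - s - c| = s by rewrite addrAC subrr add0r normrN ger0_norm.
apply: (le_trans (mass_le _ _ (measurableD mI mJ) (f_ge0 (c - s)) _)).
  move=> x [_ /negP]; rewrite -ltNge => sx.
  by apply: le_density_dist; rewrite dist_cs ltW.
rewrite lamIJ; apply: mass_ge _ _ (measurableD mJ mI) (f_ge0 _) _ => x [xs _].
by apply: le_density_dist; rewrite dist_cs.
Qed.

Lemma no_mass_gap (A C : set R) (x y t : R) :
  measurable A -> measurable C -> x < y ->
  A `&` `]x, y[ = set0 -> (A `|` `]x, y[) `&` C = set0 ->
  (forall z, x < z < y -> t <= f z) -> (forall z, C z -> f z <= t) ->
  ((2^-1)%:E <= mu A)%E -> ((2^-1)%:E <= mu C)%E -> False.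
Proof.
move=> mA mC xy AG AGC f_gap f_C muA muC.
have gap0 : mu `]x, y[%classic = 0%E.
  exact: probability_between_halves mA (measurable_itv _) mC AG AGC muA muC.
have t_le0 : t <= 0.
  rewrite leNgt; apply/negP => t_gt0.
  have := mass_ge _ _ (measurable_itv `]x, y[) (ltW t_gt0) (fun z => f_gap z).
  rewrite gap0 lebesgue_measure_itv /= lte_fin xy -EFinD -EFinM lee_fin => ?; nra.
have := mass_le _ _ mC (lexx 0) (fun z Cz => le_trans (f_C z Cz) t_le0).
by rewrite mul0e => /(le_trans muC); rewrite lee_fin; lra.
Qed.

Lemma center_le_of_half m : ((2^-1)%:E <= mu [set x | (x <= m)%R])%E -> c <= m.
Proof.
move=> muA; rewrite leNgt; apply/negP => mc.
have dist_m : `|m - c| = c - m by rewrite distrC ger0_norm // subr_ge0 ltW.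
have C_refl : [set x | 2 * c - m <= x] = (fun x => 2 * c - x) @^-1` [set x | x <= m].
  by apply/seteqP; split => x /=; lra.
apply: (@no_mass_gap [set x | x <= m] [set x | 2 * c - m <= x] m (2 * c - m) (f m)).
- by rewrite -set_itvNyc; exact: measurable_itv.
- by rewrite -set_itvcy; exact: measurable_itv.
- lra.
- by apply/seteqP; split => // z [/= zm]; rewrite in_itv /=; lra.
- by apply/seteqP; split => // z [[/= zm|/=]]; rewrite ?in_itv /=; lra.
- move=> z mz; apply: le_density_dist; rewrite dist_m ler_norml; lra.
- move=> z /= zC; apply: le_density_dist; rewrite dist_m.
  by apply: le_trans (ler_norm _); lra.
- exact: muA.
- by rewrite C_refl mass_reflect // -set_itvNyc; exact: measurable_itv.
Qed.

Lemma median_eq_center m : ((2^-1)%:E <= mu [set x | (x <= m)%R])%E ->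
  ((2^-1)%:E <= mu [set x | (m <= x)%R])%E -> m = c.
Proof.
move=> le_m ge_m; apply/le_anti; rewrite (center_le_of_half _ le_m) andbT.
suff : c <= 2 * c - m by lra.
apply: center_le_of_half; rewrite -mass_reflect; last first.
  by rewrite -set_itvNyc; exact: measurable_itv.
by rewrite (_ : _ @^-1` _ = [set x | m <= x]) //; apply/seteqP; split => x /=; lra.
Qed.

Lemma le_radius_of_halves s a : 0 <= s ->
  ((2^-1)%:E <= mu [set x | (`|x - c| <= s)%R])%E ->
  ((2^-1)%:E <= mu [set x | (a <= `|x - c|)%R])%E -> a <= s.
Proof.
move=> s_ge0 muA muC; rewrite leNgt; apply/negP => sa.
have dist_a : `|c + a - c| = a by rewrite addrAC subrr add0r ger0_norm //; lra.
have C_itv : [set x | a <= `|x - c|] = ~` `]c - a, c + a[%classic.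
  by apply/seteqP; split => x /=; rewrite in_itv /= -ltr_distl leNgt => /negP.
apply: (@no_mass_gap _ _ (c + s) (c + a) (f (c + a)) _ _ _ _ _ _ _ muA muC).
- by rewrite set_distr_le; exact: measurable_itv.
- by rewrite C_itv; exact: measurableC (measurable_itv _).
- lra.
- apply/seteqP; split => // z [/=]; rewrite ler_distl in_itv /=; lra.
- apply/seteqP; split => // z [[/=|/=]].
    by move=> zs za; lra.
  rewrite in_itv /= => /andP[sz za]; rewrite ger0_norm; lra.
- move=> z /andP[sz za]; apply: le_density_dist; rewrite dist_a ger0_norm; lra.
- by move=> z /= zC; apply: le_density_dist; rewrite dist_a.
Qed.

End symmetric_unimodal_law.
Arguments mass_dist_le_center {R mu f c}.
Arguments median_eq_center {R mu f c}.
Arguments le_radius_of_halves {R mu f c}.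

Theorem lemma15 (d : measure_display) (T : measurableType d) (R : realType)
  (P : probability T R) (X Y : {RV P >-> R}) (f : R -> R) :
  indep_rv P X Y ->
  has_density P X f -> symmetric_unimodal f ->
  forall a b : R,
    is_MAD P X a -> is_MAD P (fun w => X w + Y w) b -> a <= b.
Proof.
(* Monotonicity on the right of c follows from symmetry, hence is dropped. *)
move=> indXY [f_ge0 [mf hX]] [c [f_sym [f_incr _]]] a b.
move=> [m [[medX_le medX_ge] [_ madX]]] [v [_ [madXY _]]].
pose mu := distribution P X.
have mu_density A : measurable A ->
    mu A = (\int[lebesgue_measure]_(x in A) (f x)%:E)%E := hX A.
have m_c := median_eq_center f_ge0 mf mu_density f_sym f_incr m medX_le medX_ge.
have b_ge0 := ge0_of_half_prob_dist_le madXY.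
apply/ler_addgt0Pr => e e_gt0; have be_ge0 : 0 <= b + e by lra.
apply: (le_radius_of_halves f_ge0 mf mu_density f_sym f_incr _ _ be_ge0); last first.
  by rewrite -m_c.
have mJ : measurable [set x | `|x - c| <= b + e].
  by rewrite set_distr_le; exact: measurable_itv.
apply: (le_trans madXY); rewrite -(fineK (fin_num_measure mu _ mJ)).
apply: (prob_dist_add_le indXY e_gt0) => u.
rewrite fineK; last exact: fin_num_measure mu _ mJ.
exact: (mass_dist_le_center f_ge0 mf mu_density f_sym f_incr u _ be_ge0).
Qed.
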